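(* Let $c\ge 1$, $\gamma>0$, and $\mathbf{T} = \begin{pmatrix}1\\ c\end{pmatrix}\in\mathbb{R}^{2\times 1}$. Define $H:\mathbb{R}\rightrightarrows\mathbb{R}$ by $y\in H(x)$ if and only if $x = \mathbf{T}^{\dagger}S_\gamma\mathbf{T}(x+y)$. Then for $x\ge 0$, $$H(x) = \begin{cases} \gamma\,[-\tfrac1c,\tfrac1c], & x=0,\\ \{\tfrac{\gamma}{c}+\tfrac{x}{c^2}\}, & x\in\big(0,\tfrac{\gamma(c-1)c}{c^2+1}\big],\\ \{\gamma\,\tfrac{1+c}{1+c^2}\}, & x>\tfrac{\gamma(c-1)c}{c^2+1},\end{cases}$$ and $H(x) = -H(-x)$ for $x<0$. Moreover, $H$ is the subdifferential of the even function $\Phi:\mathbb{R}\to\mathbb{R}$ given by $$\Phi(x) = \begin{cases} \tfrac{\gamma x}{c} + \tfrac{x^2}{2c^2}, & x\in\big[0,\tfrac{\gamma(c-1)c}{c^2+1}\big],\\ \gamma\,\tfrac{1+c}{1+c^2}\,x - \tfrac{\gamma^2(c-1)^2}{2(c^2+1)^2}, & x>\tfrac{\gamma(c-1)c}{c^2+1},\\ \Phi(-x), & x<0.\end{cases}$$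
   Context: $\mathbf{T}^{\dagger} = \frac{1}{1+c^2}(1,c)$ is the Moore–Penrose inverse of $\mathbf{T}$. $S_\gamma:\mathbb{R}^2\to\mathbb{R}^2$ is componentwise soft shrinkage: $[S_\gamma(\mathbf{y})]_j = y_j-\gamma$ if $y_j\ge\gamma$, $y_j+\gamma$ if $y_j\le-\gamma$, $0$ if $|y_j|<\gamma$. The subdifferential of a convex $\Phi$ is $\partial\Phi(x)=\{y: y(\tilde x - x)\le \Phi(\tilde x)-\Phi(x)\ \forall \tilde x\in\mathbb{R}\}$. *)

From Stdlib Require Import Reals.
Open Scope R_scope.

Definition soft (g y : R) : R :=
  if Rle_dec g y then y - g
  else if Rle_dec y (- g) then y + g
  else 0.

Definition Tmap (c x : R) : R * R := (x, c * x).

Definition S2 (g : R) (v : R * R) : R * R := (soft g (fst v), soft g (snd v)).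

(* Moore-Penrose inverse T^dagger = 1/(1+c^2) (1, c) : R^2 -> R *)
Definition Tdag (c : R) (v : R * R) : R := / (1 + c ^ 2) * (fst v + c * snd v).

Definition Hrel (c g x y : R) : Prop := x = Tdag c (S2 g (Tmap c (x + y))).

Definition thr (c g : R) : R := g * (c - 1) * c / (c ^ 2 + 1).

Definition Hpos (c g x y : R) : Prop :=
  (x = 0 /\ g * (- / c) <= y <= g * (/ c)) \/
  (0 < x <= thr c g /\ y = g / c + x / c ^ 2) \/
  (thr c g < x /\ y = g * ((1 + c) / (1 + c ^ 2))).

Definition Phi_pos (c g x : R) : R :=
  if Rle_dec x (thr c g) then g * x / c + x ^ 2 / (2 * c ^ 2)
  else g * ((1 + c) / (1 + c ^ 2)) * x
       - g ^ 2 * (c - 1) ^ 2 / (2 * (c ^ 2 + 1) ^ 2).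

Definition Phi (c g x : R) : R :=
  if Rle_dec 0 x then Phi_pos c g x else Phi_pos c g (- x).

Definition subdiff (F : R -> R) (x y : R) : Prop :=
  forall xt : R, y * (xt - x) <= F xt - F x.

(* With z = x + y the relation y ∈ H(x) reads (1 + c^2) x = s(z), where
   s(z) = S_γ(z) + c S_γ(c z) is odd, vanishes on [-γ/c, γ/c], equals
   c (c z - γ) on [γ/c, γ] and (1 + c^2) z - (1 + c) γ beyond; solving for z
   gives H.  On [0, oo), Φ is the Huber-type function m x + b x^2/2 up to the
   threshold T and affine with the same slope m + b T afterwards, where m = γ/c,
   b = 1/c^2.  Its tangent lines lie below it, so the claimed values are
   subgradients of Φ = huber(|.|); and it lies below the parabolas
   f(x) + f'(x) (t - x) + b (t - x)^2/2, which forces every subgradient at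
   x > 0 to be f'(x) and every subgradient at 0 to lie in [-m, m]. *)

From Stdlib Require Import Reals Lra Psatz.
Open Scope R_scope.

Lemma soft_opp g v : 0 <= g -> soft g (- v) = - soft g v.
Proof. intros hg; unfold soft; repeat destruct Rle_dec; lra. Qed.

Lemma soft_small g v : - g <= v <= g -> soft g v = 0.
Proof. intros hv; unfold soft; repeat destruct Rle_dec; lra. Qed.

Lemma soft_large g v : g <= v -> soft g v = v - g.
Proof. intros hv; unfold soft; destruct Rle_dec; lra. Qed.

Definition shrink_sum (c g z : R) : R := soft g z + c * soft g (c * z).

Lemma Hrel_iff_shrink_sum c g x y :
  Hrel c g x y <-> (1 + c ^ 2) * x = shrink_sum c g (x + y).
Proof.
  unfold Hrel, Tdag, S2, Tmap, shrink_sum; cbn [fst snd].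
  assert (hpos : 0 < 1 + c ^ 2) by nra.
  split; intros H.
  - rewrite H at 1; field; lra.
  - apply (Rmult_eq_reg_l (1 + c ^ 2)); [rewrite H; field|]; lra.
Qed.

Lemma shrink_sum_opp c g z : 0 <= g -> shrink_sum c g (- z) = - shrink_sum c g z.
Proof.
  intros hg; unfold shrink_sum; rewrite <- Ropp_mult_distr_r, !soft_opp by lra; ring.
Qed.

Lemma Hrel_opp c g x y : 0 <= g -> Hrel c g x y <-> Hrel c g (- x) (- y).
Proof.
  intros hg; rewrite !Hrel_iff_shrink_sum, <- Ropp_plus_distr, shrink_sum_opp by exact hg.
  split; intros; lra.
Qed.

Lemma Phi_opp c g x : Phi c g (- x) = Phi c g x.
Proof.
  unfold Phi; rewrite Ropp_involutive.
  destruct (Rle_dec 0 (- x)), (Rle_dec 0 x); try reflexivity; try lra.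
  replace x with 0 by lra; rewrite Ropp_0; reflexivity.
Qed.

Lemma thr_mul c g : thr c g * (c ^ 2 + 1) = g * (c - 1) * c.
Proof. unfold thr; field; nra. Qed.

Lemma le_thr_iff c g x : x <= thr c g <-> x * (c ^ 2 + 1) <= g * (c - 1) * c.
Proof. rewrite <- thr_mul; split; intros; nra. Qed.

Lemma thr_lt_iff c g x : thr c g < x <-> g * (c - 1) * c < x * (c ^ 2 + 1).
Proof. rewrite <- thr_mul; split; intros; nra. Qed.

Lemma thr_nonneg c g : 1 <= c -> 0 <= g -> 0 <= thr c g.
Proof.
  intros hc hg; pose proof (thr_mul c g).
  assert (0 <= g * (c - 1) * c) by (apply Rmult_le_pos; [apply Rmult_le_pos |]; lra).
  nra.
Qed.

Section ShrinkSum.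

Variables c g : R.
Hypothesis hc : 1 <= c.
Hypothesis hg : 0 < g.

Let c_div : c * (g / c) = g. Proof. field; lra. Qed.
Let div_le : g / c <= g. Proof. nra. Qed.

Lemma shrink_sum_small z : - (g / c) <= z <= g / c -> shrink_sum c g z = 0.
Proof.
  intros hz; unfold shrink_sum; pose proof c_div; pose proof div_le.
  rewrite (soft_small g z), (soft_small g (c * z)) by nra; ring.
Qed.

Lemma shrink_sum_mid z : g / c <= z <= g -> shrink_sum c g z = c * (c * z - g).
Proof.
  intros hz; unfold shrink_sum; pose proof c_div.
  rewrite (soft_small g z), (soft_large g (c * z)) by nra; ring.
Qed.

Lemma shrink_sum_large z : g <= z -> shrink_sum c g z = (1 + c ^ 2) * z - (1 + c) * g.
Proof.
  intros hz; unfold shrink_sum.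
  rewrite (soft_large g z), (soft_large g (c * z)) by nra; ring.
Qed.

Lemma shrink_sum_pos z : g / c < z -> 0 < shrink_sum c g z.
Proof.
  intros hz; pose proof c_div.
  assert (g < c * z) by nra.
  destruct (Rle_dec z g).
  - rewrite shrink_sum_mid by lra; nra.
  - rewrite shrink_sum_large by lra; nra.
Qed.

Lemma shrink_sum_eq_Hpos x y :
  0 <= x -> (1 + c ^ 2) * x = shrink_sum c g (x + y) -> Hpos c g x y.
Proof.
  intros hx H; unfold Hpos; rewrite le_thr_iff, thr_lt_iff.
  pose proof c_div; pose proof div_le.
  set (z := x + y) in H; replace y with (z - x) by (unfold z; ring); clearbody z.
  destruct (Rlt_le_dec z (- (g / c))) as [hz | hz].
  - pose proof (shrink_sum_pos (- z)); rewrite shrink_sum_opp in * by lra; nra.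
  - destruct (Rle_dec z (g / c)); [|destruct (Rle_dec z g)].
    + rewrite shrink_sum_small in H by lra.
      assert (x = 0) by nra; left; repeat split; unfold Rdiv in *; nra.
    + rewrite shrink_sum_mid in H by lra.
      assert (g < c * z) by nra.
      assert (0 <= c * c * (g - z)) by (apply Rmult_le_pos; nra).
      right; left; split; [split; nra|].
      apply (Rmult_eq_reg_l (c ^ 2)); [|nra].
      replace (c ^ 2 * (g / c + x / c ^ 2)) with (c * g + x) by (field; lra); nra.
    + rewrite shrink_sum_large in H by lra.
      right; right; split; [nra|].
      apply (Rmult_eq_reg_l (1 + c ^ 2)); [|nra].
      replace ((1 + c ^ 2) * (g * ((1 + c) / (1 + c ^ 2)))) with ((1 + c) * g)
        by (field; nra); lra.
Qed.

Lemma Hpos_shrink_sum_eq x y :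
  Hpos c g x y -> (1 + c ^ 2) * x = shrink_sum c g (x + y).
Proof.
  unfold Hpos; rewrite le_thr_iff, thr_lt_iff.
  pose proof c_div; assert (hc2 : 0 < c ^ 2) by nra.
  intros [[-> hy] | [[[hx hxt] ->] | [hxt ->]]].
  - rewrite shrink_sum_small; [ring | unfold Rdiv in *; split; nra].
  - assert (hz : c ^ 2 * (x + (g / c + x / c ^ 2)) = (1 + c ^ 2) * x + c * g)
      by (field; lra).
    rewrite shrink_sum_mid; [nra | split; nra].
  - assert (hz : (1 + c ^ 2) * (x + g * ((1 + c) / (1 + c ^ 2)))
                 = (1 + c ^ 2) * x + (1 + c) * g) by (field; nra).
    rewrite shrink_sum_large; nra.
Qed.

Lemma Hrel_iff_Hpos x y : 0 <= x -> Hrel c g x y <-> Hpos c g x y.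
Proof.
  intros hx; rewrite Hrel_iff_shrink_sum.
  split; [apply shrink_sum_eq_Hpos; exact hx | apply Hpos_shrink_sum_eq].
Qed.

End ShrinkSum.

Lemma le_of_forall_small_pos e K d : 0 <= K -> 0 < d ->
  (forall s, 0 < s < d -> e <= K * s) -> e <= 0.
Proof.
  intros hK hd H; apply Rnot_lt_le; intros he.
  assert (he' : e / (2 * (K + 1)) * (2 * (K + 1)) = e) by (field; lra).
  pose proof (Rmin_l (d / 2) (e / (2 * (K + 1)))) as hsd.
  pose proof (Rmin_r (d / 2) (e / (2 * (K + 1)))) as hse.
  assert (hs0 : 0 < Rmin (d / 2) (e / (2 * (K + 1))))
    by (apply Rmin_glb_lt; apply Rdiv_lt_0_compat; lra).
  set (s := Rmin (d / 2) (e / (2 * (K + 1)))) in *.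
  specialize (H s ltac:(lra)); nra.
Qed.

Lemma subdiff_le_of_upper F x y d K r : 0 <= K -> 0 < r ->
  (forall s, 0 < s < r -> F (x + s) <= F x + d * s + K * s ^ 2) ->
  subdiff F x y -> y <= d.
Proof.
  intros hK hr HF Hy.
  enough (y - d <= 0) by lra.
  apply (le_of_forall_small_pos _ K r hK hr); intros s hs.
  specialize (Hy (x + s)); specialize (HF s hs).
  replace (x + s - x) with s in Hy by ring; nra.
Qed.

Lemma subdiff_ge_of_upper F x y d K r : 0 <= K -> 0 < r ->
  (forall s, 0 < s < r -> F (x - s) <= F x - d * s + K * s ^ 2) ->
  subdiff F x y -> d <= y.
Proof.
  intros hK hr HF Hy.
  enough (d - y <= 0) by lra.
  apply (le_of_forall_small_pos _ K r hK hr); intros s hs.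
  specialize (Hy (x - s)); specialize (HF s hs).
  replace (x - s - x) with (- s) in Hy by ring; nra.
Qed.

Lemma subdiff_opp F x y : (forall t, F (- t) = F t) ->
  subdiff F x y -> subdiff F (- x) (- y).
Proof.
  intros HF Hy t; specialize (Hy (- t)); rewrite HF in Hy; rewrite HF; nra.
Qed.

Lemma subdiff_ext F G x y : (forall t, F t = G t) ->
  subdiff F x y -> subdiff G x y.
Proof. intros HFG Hy t; rewrite <- !HFG; apply Hy. Qed.

Section Huber.

Variables m b T : R.
Hypothesis hm : 0 <= m.
Hypothesis hb : 0 <= b.
Hypothesis hT : 0 <= T.

Definition huber (x : R) : R :=
  if Rle_dec x T then m * x + b * x ^ 2 / 2 else (m + b * T) * x - b * T ^ 2 / 2.

Definition huber_slope (x : R) : R := m + b * Rmin x T.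

Lemma huber_tangent x t : 0 <= x -> 0 <= t ->
  huber x + huber_slope x * (t - x) <= huber t.
Proof.
  intros hx ht; unfold huber, huber_slope.
  destruct (Rle_dec x T), (Rle_dec t T).
  - rewrite Rmin_left by lra.
    assert (0 <= b * (t - x) ^ 2) by (apply Rmult_le_pos; [lra | apply pow2_ge_0]); nra.
  - rewrite Rmin_left by lra.
    assert (0 <= b * ((T - x) * (2 * t - T - x))) by (apply Rmult_le_pos; nra); nra.
  - rewrite Rmin_right by lra.
    assert (0 <= b * (t - T) ^ 2) by (apply Rmult_le_pos; [lra | apply pow2_ge_0]); nra.
  - rewrite Rmin_right by lra; lra.
Qed.

Lemma huber_upper x t : 0 <= x -> 0 <= t ->
  huber t <= huber x + huber_slope x * (t - x) + b / 2 * (t - x) ^ 2.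
Proof.
  intros hx ht; unfold huber, huber_slope.
  destruct (Rle_dec x T), (Rle_dec t T).
  - rewrite Rmin_left by lra; lra.
  - rewrite Rmin_left by lra.
    assert (0 <= b * (t - T) ^ 2) by (apply Rmult_le_pos; [lra | apply pow2_ge_0]); nra.
  - rewrite Rmin_right by lra.
    assert (0 <= b * ((x - T) * (x + T - 2 * t))) by (apply Rmult_le_pos; nra); nra.
  - rewrite Rmin_right by lra.
    assert (0 <= b * (t - x) ^ 2) by (apply Rmult_le_pos; [lra | apply pow2_ge_0]); nra.
Qed.

Lemma huber_0 : huber 0 = 0.
Proof. unfold huber; destruct Rle_dec; lra. Qed.

Lemma huber_slope_0 : huber_slope 0 = m.
Proof. unfold huber_slope; rewrite Rmin_left by lra; ring. Qed.

Lemma huber_slope_nonneg x : 0 <= x -> 0 <= huber_slope x.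
Proof.
  intros hx; unfold huber_slope.
  assert (0 <= Rmin x T) by (apply Rmin_glb; lra); nra.
Qed.

Definition huber_subgrad (x y : R) : Prop :=
  (x = 0 /\ - m <= y <= m) \/ (0 < x /\ y = huber_slope x).

Lemma subdiff_huber_abs x y : 0 <= x ->
  subdiff (fun t => huber (Rabs t)) x y <-> huber_subgrad x y.
Proof.
  intros hx; unfold huber_subgrad; split.
  - intros H; destruct (Rle_lt_or_eq_dec 0 x hx) as [hx0 | <-].
    + right; split; [exact hx0 | apply Rle_antisym].
      * refine (subdiff_le_of_upper _ x y _ (b / 2) 1 _ _ _ H); [lra | lra |].
        intros s hs; rewrite !Rabs_pos_eq by lra.
        pose proof (huber_upper x (x + s)); nra.
      * refine (subdiff_ge_of_upper _ x y _ (b / 2) x _ _ _ H); [lra | exact hx0 |].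
        intros s hs; rewrite !Rabs_pos_eq by lra.
        pose proof (huber_upper x (x - s)); nra.
    + left; split; [reflexivity | split].
      * refine (subdiff_ge_of_upper _ 0 y (- m) (b / 2) 1 _ _ _ H); [lra | lra |].
        intros s hs; rewrite Rabs_R0, Rminus_0_l, Rabs_Ropp, Rabs_pos_eq by lra.
        pose proof (huber_upper 0 s); rewrite huber_slope_0 in *; nra.
      * refine (subdiff_le_of_upper _ 0 y m (b / 2) 1 _ _ _ H); [lra | lra |].
        intros s hs; rewrite Rabs_R0, Rplus_0_l, Rabs_pos_eq by lra.
        pose proof (huber_upper 0 s); rewrite huber_slope_0 in *; nra.
  - intros [[-> hy] | [hx0 ->]] t; cbv beta.
    + pose proof (huber_tangent 0 (Rabs t) (Rle_refl 0) (Rabs_pos t)) as Ht.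
      rewrite huber_0, huber_slope_0 in Ht.
      assert (y * t <= m * Rabs t).
      { eapply Rle_trans; [apply Rle_abs|].
        rewrite Rabs_mult; apply Rmult_le_compat_r;
          [apply Rabs_pos | apply Rabs_le; lra]. }
      rewrite Rabs_R0, huber_0; lra.
    + pose proof (huber_tangent x (Rabs t) hx (Rabs_pos t)).
      pose proof (huber_slope_nonneg x hx); pose proof (Rle_abs t).
      rewrite (Rabs_pos_eq x hx); nra.
Qed.

End Huber.

Section PhiHuber.

Variables c g : R.
Hypothesis hc : 1 <= c.
Hypothesis hg : 0 < g.

Lemma Phi_huber_abs x : Phi c g x = huber (g / c) (/ c ^ 2) (thr c g) (Rabs x).
Proof.
  assert (Phi_pos_huber : forall t, Phi_pos c g t = huber (g / c) (/ c ^ 2) (thr c g) t).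
  { intros t; unfold Phi_pos, huber, thr; destruct Rle_dec; field; nra. }
  unfold Phi; destruct Rle_dec.
  - rewrite Rabs_pos_eq by lra; apply Phi_pos_huber.
  - rewrite Rabs_left by lra; apply Phi_pos_huber.
Qed.

Lemma Hpos_iff_huber_subgrad x y :
  Hpos c g x y <-> huber_subgrad (g / c) (/ c ^ 2) (thr c g) x y.
Proof.
  unfold Hpos, huber_subgrad, huber_slope.
  replace (g / c + x / c ^ 2) with (g / c + / c ^ 2 * x) by (field; lra).
  replace (g * ((1 + c) / (1 + c ^ 2))) with (g / c + / c ^ 2 * thr c g)
    by (unfold thr; field; nra).
  replace (g * - / c) with (- (g / c)) by (field; lra).
  pose proof (thr_nonneg c g hc (Rlt_le _ _ hg)).
  destruct (Rle_dec x (thr c g)); [rewrite Rmin_left | rewrite Rmin_right]; lra.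
Qed.

End PhiHuber.

Theorem lemma2p1 (c g : R) (hc : 1 <= c) (hg : 0 < g) :
  (forall x y : R, 0 <= x -> (Hrel c g x y <-> Hpos c g x y)) /\
  (forall x y : R, x < 0 -> (Hrel c g x y <-> Hrel c g (- x) (- y))) /\
  (forall x : R, Phi c g (- x) = Phi c g x) /\
  (forall x y : R, Hrel c g x y <-> subdiff (Phi c g) x y).
Proof.
  assert (hm : 0 <= g / c) by (apply Rlt_le, Rdiv_lt_0_compat; lra).
  assert (hb : 0 <= / c ^ 2) by (apply Rlt_le, Rinv_0_lt_compat; nra).
  pose proof (thr_nonneg c g hc (Rlt_le _ _ hg)) as hT.
  assert (Hsub : forall x y, 0 <= x -> Hrel c g x y <-> subdiff (Phi c g) x y).
  { intros x y hx.
    rewrite Hrel_iff_Hpos, Hpos_iff_huber_subgrad, <- subdiff_huber_abs by assumption.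
    split; apply subdiff_ext; intros t;
      rewrite Phi_huber_abs by assumption; reflexivity. }
  split; [exact (Hrel_iff_Hpos c g hc hg)|].
  split; [intros x y _; apply Hrel_opp; lra|].
  split; [exact (Phi_opp c g)|].
  intros x y; destruct (Rle_or_lt 0 x) as [hx | hx]; [exact (Hsub x y hx)|].
  rewrite Hrel_opp, Hsub by lra.
  split; intros H.
  - rewrite <- (Ropp_involutive x), <- (Ropp_involutive y).
    apply subdiff_opp; [exact (Phi_opp c g) | exact H].
  - apply subdiff_opp; [exact (Phi_opp c g) | exact H].
Qed.
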